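(* Let $L_1,L_2,L_3$ be self-adjoint complex $2\times2$ matrices and consider the stochastic differential equation for a complex process $w$, with $W=(1,w)$, \[ dw=\frac12\sum_{j=1}^3[w(L_j^*L_jW)_0-(L_j^*L_jW)_1]\,dt+\sum_{j=1}^3[w(L_jW)_0^2-(L_jW)_0(L_jW)_1]\,dt+\sum_{j=1}^3[(L_jW)_1-w(L_jW)_0]\,dY^j_t, \] where $Y$ is a standard three-dimensional Wiener process. Its diffusion operator (generator), written in coordinates $w=x+iy$, coincides up to a constant multiplier with the Laplace–Beltrami operator of the unit sphere in stereographic coordinates, $\frac14(1+x^2+y^2)^2\big(\frac{\partial^2}{\partial x^2}+\frac{\partial^2}{\partial y^2}\big)$, if and only if $L_1,L_2,L_3$ form a basis of the real space of traceless self-adjoint $2\times2$ matrices which is orthogonal in the sense that \[ \mathrm{tr}(L_jL_k)=2\big(l^{00}_jl^{00}_k+\mathrm{Re}\,l^{01}_j\,\mathrm{Re}\,l^{01}_k+\mathrm{Im}\,l^{01}_j\,\mathrm{Im}\,l^{01}_k\big)=a\,\delta_{jk} \] for some constant $a$, where $L_j=\begin{pmatrix} l^{00}_j & l^{01}_j\\ \overline{l^{01}_j} & l^{11}_j\end{pmatrix}$. For the Pauli matrices $a=2$, and the diffusion operator equals exactly the Laplace–Beltrami operator when $a=1$.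
   Context: For $v\in\mathbb{C}^2$, $(v)_0,(v)_1$ denote its coordinates. This SDE is the quantum filtering equation for a qubit with vanishing Hamiltonian and coupling operators $L_j$, in the projective coordinate $w=\chi_1/\chi_0$. The Pauli matrices are $\sigma_1=\begin{pmatrix}0&1\\1&0\end{pmatrix}$, $\sigma_2=\begin{pmatrix}0&-i\\ i&0\end{pmatrix}$, $\sigma_3=\begin{pmatrix}1&0\\0&-1\end{pmatrix}$. *)

From HB Require Import structures.
From mathcomp Require Import all_boot all_order all_algebra.
From mathcomp Require Import all_classical all_reals all_analysis.
From mathcomp Require Import complex.
Set Implicit Arguments. Unset Strict Implicit. Unset Printing Implicit Defensive.
Import Order.TTheory GRing.Theory Num.Theory.
Local Open Scope ring_scope.
Local Open Scope complex_scope.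

Section QF.
Variable R : realType.
Local Notation C := (R[i]).

Definition adjmx (A : 'M[C]_2) : 'M[C]_2 := (map_mx (@conjc R) A)^T.
Definition selfadj (A : 'M[C]_2) : Prop := adjmx A = A.
Definition traceless_sa (A : 'M[C]_2) : Prop := selfadj A /\ \tr A = 0.

Definition is_tsa_basis (L : 'I_3 -> 'M[C]_2) : Prop :=
  (forall j, traceless_sa (L j)) /\
  (forall M, traceless_sa M ->
     exists! c : 'I_3 -> R, M = \sum_(j < 3) ((c j)%:C *: L j)).

Definition orth_with (L : 'I_3 -> 'M[C]_2) (a : R) : Prop :=
  forall j k : 'I_3, \tr (L j *m L k) = (a * (j == k)%:R)%:C.

Definition Wv (w : C) : 'cV[C]_2 := \col_(i < 2) (if i == ord0 then 1 else w).
Definition co0 (v : 'cV[C]_2) : C := v ord0 ord0.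
Definition co1 (v : 'cV[C]_2) : C := v (lift ord0 ord0) ord0.

Definition drift (L : 'I_3 -> 'M[C]_2) (w : C) : C :=
  2^-1 * \sum_(j < 3) (w * co0 ((adjmx (L j) *m L j) *m Wv w)
                           - co1 ((adjmx (L j) *m L j) *m Wv w))
  + \sum_(j < 3) (w * (co0 (L j *m Wv w)) ^+ 2
                   - co0 (L j *m Wv w) * co1 (L j *m Wv w)).

Definition diffc (L : 'I_3 -> 'M[C]_2) (j : 'I_3) (w : C) : C :=
  co1 (L j *m Wv w) - w * co0 (L j *m Wv w).

Definition dX (f : R -> R -> R) x y : R := derive1 (fun s => f s y) x.
Definition dY (f : R -> R -> R) x y : R := derive1 (fun t => f x t) y.
Definition dXX (f : R -> R -> R) x y : R := derive1 (fun s => dX f s y) x.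
Definition dYY (f : R -> R -> R) x y : R := derive1 (fun t => dY f x t) y.
Definition dXY (f : R -> R -> R) x y : R := derive1 (fun t => dX f x t) y.

Definition generator (L : 'I_3 -> 'M[C]_2) (f : R -> R -> R) (x y : R) : R :=
  let w := x +i* y in
  complex.Re (drift L w) * dX f x y + complex.Im (drift L w) * dY f x y
  + 2^-1 * \sum_(j < 3)
      (complex.Re (diffc L j w) ^+ 2 * dXX f x y
       + 2 * complex.Re (diffc L j w) * complex.Im (diffc L j w) * dXY f x y
       + complex.Im (diffc L j w) ^+ 2 * dYY f x y).

Definition laplace_beltrami (f : R -> R -> R) (x y : R) : R :=
  4^-1 * (1 + x ^+ 2 + y ^+ 2) ^+ 2 * (dXX f x y + dYY f x y).

Definition pauli (j : 'I_3) : 'M[C]_2 :=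
  \matrix_(r < 2, s < 2)
    (if val j == 0%N then (if r == s then 0 else 1)
     else if val j == 1%N then
       (if r == s then 0 else if val r == 0%N then - 'i else 'i)
     else (if r == s then (if val r == 0%N then 1 else -1) else 0)).

End QF.

From HB Require Import structures.
From mathcomp Require Import all_boot all_order all_algebra.
From mathcomp Require Import all_classical all_reals all_analysis.
From mathcomp Require Import complex ring lra.
Set Implicit Arguments. Unset Strict Implicit. Unset Printing Implicit Defensive.
Import Order.TTheory GRing.Theory Num.Theory.
Local Open Scope ring_scope.

(* Write each L_j as (s_j / 2) I + x_j1 sigma_1 + x_j2 sigma_2 + x_j3 sigma_3 and let
   M be the real 3x3 matrix with rows x_j. At w = x + iy the coefficient of dY^j is
   g_j(w) = (M Phi(w))_j with Phi(w) = (1 - w^2, i (1 + w^2), -2w), so the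
   second-order part of the generator is the Gram form M^T M evaluated on Re Phi and
   Im Phi. These two vectors are orthogonal and both have length 1 + |w|^2, hence the
   second-order part is c times the Laplace-Beltrami operator iff M^T M = (c/2) I.
   The drift is - sum_j g_j (s_j - g_j'/2); once M^T M is scalar the g g' part
   vanishes for the same reason, leaving - s^T M Phi(w), which vanishes identically
   iff s = 0. Finally c != 0 makes M invertible, so the L_j form a basis of the
   traceless self-adjoint matrices, and tr (L_j L_k) = 2 (M M^T)_jk. *)

Lemma ord2_ind (P : 'I_2 -> Prop) : P ord0 -> P (lift ord0 ord0) -> forall i, P i.
Proof. by move=> P0 P1 i; case: (unliftP ord0 i) => [j ->|->] //; rewrite (ord1 j). Qed.

Lemma ord3_ind (P : 'I_3 -> Prop) :
  P ord0 -> P (lift ord0 ord0) -> P (lift ord0 (lift ord0 ord0)) -> forall i, P i.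
Proof. by move=> P0 P1 P2 i; case: (unliftP ord0 i) => [j ->|->] //; elim/ord2_ind: j. Qed.

Section ScalarGramMatrices.
Variables (F : fieldType) (n : nat).

Lemma trmx_mul_scalarC (M : 'M[F]_n) k : k != 0 -> M^T *m M = k%:M -> M *m M^T = k%:M.
Proof.
move=> k0 MtM; have inv : (k^-1 *: M^T) *m M = 1%:M.
  by rewrite -scalemxAl MtM scale_scalar_mx mulVf.
by rewrite -[M^T](scalerKV k0) -scalemxAr (mulmx1C inv) scalemx1.
Qed.

Lemma unitmx_trmx_mul_scalar (M : 'M[F]_n) k : k != 0 -> M^T *m M = k%:M -> M \in unitmx.
Proof.
move=> k0 MtM; have inv : (k^-1 *: M^T) *m M = 1%:M.
  by rewrite -scalemxAl MtM scale_scalar_mx mulVf.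
by have [] := mulmx1_unit inv.
Qed.

End ScalarGramMatrices.

Lemma mulmx_tr_eq0 (F : realDomainType) m n (M : 'M[F]_(m, n)) : M *m M^T = 0 -> M = 0.
Proof.
move=> MMt; apply/matrixP => i j; rewrite mxE.
move/matrixP/(_ i i): MMt; rewrite !mxE => /psumr_eq0P sq0.
have sq_ge0 l : true -> 0 <= M i l * M^T l i by rewrite mxE -expr2 sqr_ge0.
by have /eqP := sq0 sq_ge0 j isT; rewrite mxE mulf_eq0 orbb => /eqP.
Qed.

Section SecondOrderOperators.
Variable R : realType.

Lemma derive1_quadratic (a b c x : R) :
  derive1 (fun s => a * s + b * (s * s) + c) x = a + 2 * b * x.
Proof.
rewrite derive1E; apply: derive_val.
by apply: is_derive_eq; rewrite /GRing.scale /=; ring.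
Qed.

Definition quadratic (a1 a2 a3 a4 a5 : R) (s t : R) : R :=
  a1 * s + a2 * t + a3 * (s * s) + a4 * (s * t) + a5 * (t * t).

Lemma quadratic_partials a1 a2 a3 a4 a5 x y :
  let q := quadratic a1 a2 a3 a4 a5 in
  [/\ dX q x y = a1 + 2 * a3 * x + a4 * y, dY q x y = a2 + a4 * x + 2 * a5 * y,
      dXX q x y = 2 * a3, dXY q x y = a4 & dYY q x y = 2 * a5].
Proof.
move=> q.
have qX u t : dX q u t = a1 + 2 * a3 * u + a4 * t.
  rewrite /dX (_ : (fun s => q s t) =
    fun s => (a1 + a4 * t) * s + a3 * (s * s) + (a2 * t + a5 * (t * t))).
    by rewrite derive1_quadratic; ring.
  by apply: funext => s; rewrite /q /quadratic; ring.
have qY s v : dY q s v = a2 + a4 * s + 2 * a5 * v.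
  rewrite /dY (_ : (fun t => q s t) =
    fun t => (a2 + a4 * s) * t + a5 * (t * t) + (a1 * s + a3 * (s * s))).
    by rewrite derive1_quadratic; ring.
  by apply: funext => t; rewrite /q /quadratic; ring.
split; rewrite ?qX ?qY // /dXX /dXY /dYY.
- under eq_fun do rewrite qX.
  rewrite (_ : (fun s => _) = fun s => 2 * a3 * s + 0 * (s * s) + (a1 + a4 * y)).
    by rewrite derive1_quadratic; ring.
  by apply: funext => s; ring.
- under eq_fun do rewrite qX.
  rewrite (_ : (fun t => _) = fun t => a4 * t + 0 * (t * t) + (a1 + 2 * a3 * x)).
    by rewrite derive1_quadratic; ring.
  by apply: funext => t; ring.
- under eq_fun do rewrite qY.
  rewrite (_ : (fun t => _) = fun t => 2 * a5 * t + 0 * (t * t) + (a2 + a4 * x)).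
    by rewrite derive1_quadratic; ring.
  by apply: funext => t; ring.
Qed.

Lemma second_order_coef_eq0 (b1 b2 c11 c12 c22 x y : R) :
  (forall f, b1 * dX f x y + b2 * dY f x y
             + c11 * dXX f x y + c12 * dXY f x y + c22 * dYY f x y = 0) ->
  [/\ b1 = 0, b2 = 0, c11 = 0, c12 = 0 & c22 = 0].
Proof.
move=> H.
have E a1 a2 a3 a4 a5 : b1 * (a1 + 2 * a3 * x + a4 * y) + b2 * (a2 + a4 * x + 2 * a5 * y)
    + c11 * (2 * a3) + c12 * a4 + c22 * (2 * a5) = 0.
  have := H (quadratic a1 a2 a3 a4 a5).
  by have [-> -> -> -> ->] := quadratic_partials a1 a2 a3 a4 a5 x y.
have b1_0 : b1 = 0 by have := E 1 0 0 0 0; rewrite !(mulr0, mul0r, addr0) mulr1.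
have b2_0 : b2 = 0 by have := E 0 1 0 0 0; rewrite !(mulr0, mul0r, addr0, add0r) mulr1.
move: (E 0 0 1 0 0) (E 0 0 0 1 0) (E 0 0 0 0 1).
rewrite b1_0 b2_0 !mul0r !add0r => h3 h4 h5.
by split => //; lra.
Qed.
End SecondOrderOperators.

Section Qubit.
Local Open Scope complex_scope.
Variable R : realType.
Local Notation C := R[i].
Local Notation Re := (@complex.Re R).
Local Notation Im := (@complex.Im R).
Local Notation i0 := (ord0 : 'I_2).
Local Notation i1 := (lift ord0 ord0 : 'I_2).
Implicit Types (A : 'M[C]_2) (L : 'I_3 -> 'M[C]_2) (w : C) (x y : R).

Lemma mxtrace2 A : \tr A = A i0 i0 + A i1 i1.
Proof. by rewrite /mxtrace !big_ord_recl big_ord0 addr0. Qed.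

Lemma mulmx2E m n (M : 'M[C]_(m, 2)) (N : 'M[C]_(2, n)) i j :
  (M *m N) i j = M i i0 * N i0 j + M i i1 * N i1 j.
Proof. by rewrite mxE !big_ord_recl big_ord0 addr0. Qed.

Lemma co0_mulWv A w : co0 (A *m Wv w) = A i0 i0 + A i0 i1 * w.
Proof. by rewrite /co0 mulmx2E !mxE mulr1. Qed.

Lemma co1_mulWv A w : co1 (A *m Wv w) = A i1 i0 + A i1 i1 * w.
Proof. by rewrite /co1 mulmx2E !mxE mulr1. Qed.

Lemma inv2_complex : (2^-1 : C) = 2^-1 +i* 0.
Proof. by rewrite complexr0 fmorphV rmorph_nat. Qed.

Lemma selfadj_param A : selfadj A -> exists p r a b,
  [/\ A i0 i0 = p +i* 0, A i1 i1 = r +i* 0, A i0 i1 = a +i* b & A i1 i0 = a -i* b].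
Proof.
move=> sa; have Aconj i j : (A j i)^* = A i j by rewrite -{2}sa !mxE.
exists (Re (A i0 i0)), (Re (A i1 i1)), (Re (A i0 i1)), (Im (A i0 i1)).
split; last by rewrite -Aconj; case: (A i0 i1).
- by move: (Aconj i0 i0); case: (A i0 i0) => a b [] b0; congr (_ +i* _); lra.
- by move: (Aconj i1 i1); case: (A i1 i1) => a b [] b0; congr (_ +i* _); lra.
- by case: (A i0 i1).
Qed.

Lemma trace_selfadj A : selfadj A -> \tr A = (Re (\tr A))%:C.
Proof.
by move=> /selfadj_param[p [r [a [b [e00 e11 _ _]]]]]; rewrite mxtrace2 e00 e11; simpc.
Qed.

Lemma drift_selfadj L w : (forall j, selfadj (L j)) ->
  drift L w = - \sum_(j < 3) diffc L j w * (\tr (L j) / 2 + co0 (L j *m Wv w)).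
Proof.
move=> sa; rewrite /drift mulr_sumr -big_split -sumrN /=; apply: eq_bigr => j _.
rewrite (sa j) /diffc !co0_mulWv !co1_mulWv !mulmx2E mxtrace2; ring.
Qed.

(* [pauli_coord A] are the coefficients of A - (tr A / 2) I on sigma_1, sigma_2, sigma_3. *)
Definition pauli_coord A : 'rV[R]_3 :=
  \row_l [:: Re (A i0 i1); - Im (A i0 i1); Re (A i0 i0 - A i1 i1) / 2]`_l.
Definition coordmx L : 'M[R]_3 := \matrix_(j, l) pauli_coord (L j) 0 l.
Definition trace_vec L : 'cV[R]_3 := \col_j Re (\tr (L j)).

Lemma traceless_sa_pauli j : traceless_sa (pauli R j).
Proof.
split; last by elim/ord3_ind: j; rewrite mxtrace2 !mxE /=; simpc.
by apply/matrixP; elim/ord3_ind: j; apply: ord2_ind; apply: ord2_ind;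
  rewrite !mxE /=; simpc.
Qed.

Lemma pauli_coord_comb (v : 'rV[R]_3) :
  pauli_coord (\sum_l (v 0 l)%:C *: pauli R l) = v.
Proof.
by apply/rowP; apply: ord3_ind;
  rewrite !mxE /= !summxE !big_ord_recl !big_ord0 !mxE /=; lra.
Qed.

Lemma tsa_pauli_decomp A : traceless_sa A -> A = \sum_l (pauli_coord A 0 l)%:C *: pauli R l.
Proof.
case=> /selfadj_param[p [r [a [b [e00 e11 e01 e10]]]]].
rewrite mxtrace2 e00 e11 => /(congr1 Re) /= tr0.
apply/matrixP; apply: ord2_ind; apply: ord2_ind;
  rewrite summxE !big_ord_recl !big_ord0 !mxE /= ?e00 ?e11 ?e01 ?e10;
  apply/eqP; rewrite eq_complex /=; apply/andP; split; apply/eqP; lra.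
Qed.

Lemma lin_comb_coordmx L (c : 'I_3 -> R) : (forall j, traceless_sa (L j)) ->
  \sum_j (c j)%:C *: L j = \sum_l (((\row_j c j) *m coordmx L) 0 l)%:C *: pauli R l.
Proof.
move=> tsa.
under eq_bigr do rewrite (tsa_pauli_decomp (tsa _)) scaler_sumr.
rewrite exchange_big /=; apply: eq_bigr => l _.
rewrite mxE rmorph_sum scaler_suml; apply: eq_bigr => j _.
by rewrite !mxE scalerA -rmorphM.
Qed.

Lemma is_tsa_basis_unitmx L :
  (forall j, traceless_sa (L j)) -> coordmx L \in unitmx -> is_tsa_basis L.
Proof.
move=> tsa Munit; split=> // T tsaT.
pose c := pauli_coord T *m invmx (coordmx L).
have coordT (d : 'I_3 -> R) : T = \sum_j (d j)%:C *: L j -> \row_j d j = c.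
  by move=> Td; rewrite /c Td lin_comb_coordmx // pauli_coord_comb mulmxK.
exists (fun j => c 0 j); split; last first.
  by move=> d /coordT dc; apply: funext => j; rewrite -dc mxE.
rewrite lin_comb_coordmx // (_ : \row_j c 0 j = c); last by apply/rowP => j; rewrite mxE.
by rewrite mulmxKV // -tsa_pauli_decomp.
Qed.

Lemma tsa_basis_coordmx_neq0 L : is_tsa_basis L -> coordmx L != 0.
Proof.
case=> tsa basis; apply/eqP => M0.
have [c [Ec _]] := basis _ (traceless_sa_pauli ord0).
move: Ec; rewrite lin_comb_coordmx // M0 mulmx0 big1 => [|l _]; last first.
  by rewrite mxE rmorph0 scale0r.
by move/matrixP/(_ i0 i1); rewrite !mxE /= => /eqP; rewrite oner_eq0.
Qed.

Lemma trace_mul_coord L j k : selfadj (L j) -> selfadj (L k) ->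
  \tr (L j *m L k) =
  (2 * (coordmx L *m (coordmx L)^T) j k + trace_vec L j 0 * trace_vec L k 0 / 2)%:C.
Proof.
move=> /selfadj_param[p [r [a [b [e00 e11 e01 e10]]]]].
move=> /selfadj_param[p' [r' [a' [b' [f00 f11 f01 f10]]]]].
rewrite mxtrace2 !mulmx2E !(big_ord_recl, big_ord0, mxE) /= !mxtrace2.
rewrite e00 e11 e01 e10 f00 f11 f01 f10 -complexr0.
by simpc; rewrite /=; congr (_ +i* _); field.
Qed.

Lemma orth_with_coordmx L a : (forall j, traceless_sa (L j)) ->
  orth_with L a <-> coordmx L *m (coordmx L)^T = (a / 2)%:M.
Proof.
move=> tsa; have s0 j : trace_vec L j 0 = 0 by rewrite mxE (tsa j).2.
split => [orth | MMt j k].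
- apply/matrixP => j k; have := orth j k.
  rewrite (trace_mul_coord (tsa j).1 (tsa k).1) !s0 !mul0r addr0 [_%:M _ _]mxE.
  by move=> /complexI; case: (j == k); rewrite ?mulr1n ?mulr0n; lra.
- rewrite (trace_mul_coord (tsa j).1 (tsa k).1) MMt !s0 !mul0r addr0 [_%:M _ _]mxE.
  by case: (j == k); rewrite ?mulr1n ?mulr0n; congr (_%:C); lra.
Qed.

Lemma coordmx_pauli : coordmx (pauli R) = 1%:M.
Proof.
apply/matrixP; apply: ord3_ind; apply: ord3_ind;
  rewrite !mxE /= ?mulr1n ?mulr0n //; lra.
Qed.

Lemma orth_with_pauli : orth_with (pauli R) 2.
Proof.
apply/orth_with_coordmx; first exact: traceless_sa_pauli.
by rewrite coordmx_pauli trmx1 mulmx1 divff // pnatr_eq0.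
Qed.

Definition gram L : 'M[R]_3 := (coordmx L)^T *m coordmx L.

Definition bilin (G : 'M[R]_3) (u v : 'cV[R]_3) : R := (u^T *m G *m v) 0 0.

Definition vec3 (a b c : R) : 'cV[R]_3 := \col_i [:: a; b; c]`_i.

(* Real and imaginary parts of Phi(w) = (1 - w^2, i (1 + w^2), -2w) and of
   Phi'(w) / 2 = (-w, i w, -1), at w = x + iy. *)
Definition phi_re x y := vec3 (1 - x ^+ 2 + y ^+ 2) (- 2 * x * y) (- 2 * x).
Definition phi_im x y := vec3 (- 2 * x * y) (1 + x ^+ 2 - y ^+ 2) (- 2 * y).
Definition dphi_re x y := vec3 (- x) (- y) (- 1).
Definition dphi_im x y := vec3 (- y) x 0.

Lemma coordmx_vec3 L j a b c :
  (coordmx L *m vec3 a b c) j 0 =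
  Re (L j i0 i1) * a - Im (L j i0 i1) * b + Re (L j i0 i0 - L j i1 i1) / 2 * c.
Proof. by rewrite !mxE !big_ord_recl big_ord0 !mxE /=; ring. Qed.

Lemma diffc_coord L j x y : selfadj (L j) ->
  diffc L j (x +i* y) = (coordmx L *m phi_re x y) j 0 +i* (coordmx L *m phi_im x y) j 0.
Proof.
move=> /selfadj_param[p [r [a [b [e00 e11 e01 e10]]]]].
rewrite /diffc co0_mulWv co1_mulWv !coordmx_vec3 e00 e11 e01 e10.
by simpc; rewrite /=; congr (_ +i* _); field.
Qed.

Lemma trace_co0_coord L j x y : selfadj (L j) ->
  \tr (L j) / 2 + co0 (L j *m Wv (x +i* y)) =
  (Re (\tr (L j)) - (coordmx L *m dphi_re x y) j 0) -i* (coordmx L *m dphi_im x y) j 0.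
Proof.
move=> /selfadj_param[p [r [a [b [e00 e11 e01 e10]]]]].
rewrite co0_mulWv mxtrace2 !coordmx_vec3 e00 e11 e01 inv2_complex.
by simpc; rewrite /=; congr (_ +i* _); field.
Qed.

Lemma bilin_sum G u v : bilin G u v = \sum_j u j 0 * (G *m v) j 0.
Proof. by rewrite /bilin -mulmxA mxE; apply: eq_bigr => j _; rewrite mxE. Qed.

Lemma gram_sum (M : 'M[R]_3) u v :
  \sum_j (M *m u) j 0 * (M *m v) j 0 = bilin (M^T *m M) u v.
Proof.
rewrite /bilin !mulmxA -trmx_mul -mulmxA mxE.
by apply: eq_bigr => j _; rewrite !mxE.
Qed.

Lemma bilin_scalar k u v : bilin k%:M u v = k * bilin 1%:M u v.
Proof. by rewrite /bilin -[k%:M]scalemx1 -scalemxAr -scalemxAl mxE. Qed.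

Lemma bilin1_vec3 a b c a' b' c' :
  bilin 1%:M (vec3 a b c) (vec3 a' b' c') = a * a' + b * b' + c * c'.
Proof. by rewrite bilin_sum mul1mx !big_ord_recl big_ord0 !mxE /=; ring. Qed.

Lemma phi_orthogonal x y :
  [/\ bilin 1%:M (phi_re x y) (phi_re x y) = (1 + x ^+ 2 + y ^+ 2) ^+ 2,
      bilin 1%:M (phi_im x y) (phi_im x y) = (1 + x ^+ 2 + y ^+ 2) ^+ 2,
      bilin 1%:M (phi_re x y) (phi_im x y) = 0,
      bilin 1%:M (phi_re x y) (dphi_re x y) = bilin 1%:M (phi_im x y) (dphi_im x y) &
      bilin 1%:M (phi_re x y) (dphi_im x y) = - bilin 1%:M (phi_im x y) (dphi_re x y)].
Proof. by rewrite !bilin1_vec3; split; ring. Qed.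

Lemma generator_gram L f x y : (forall j, selfadj (L j)) ->
  generator L f x y =
    Re (drift L (x +i* y)) * dX f x y + Im (drift L (x +i* y)) * dY f x y
    + 2^-1 * (bilin (gram L) (phi_re x y) (phi_re x y) * dXX f x y
              + 2 * bilin (gram L) (phi_re x y) (phi_im x y) * dXY f x y
              + bilin (gram L) (phi_im x y) (phi_im x y) * dYY f x y).
Proof.
move=> sa; have diffcE j := diffc_coord x y (sa j).
by rewrite /generator /gram -!gram_sum !big_ord_recl !big_ord0 !diffcE /=; ring.
Qed.

Lemma drift_gram L x y : (forall j, selfadj (L j)) ->
  drift L (x +i* y) =
    (bilin (gram L) (phi_re x y) (dphi_re x y) - bilin (gram L) (phi_im x y) (dphi_im x y)
      - bilin (coordmx L) (trace_vec L) (phi_re x y))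
    +i* (bilin (gram L) (phi_re x y) (dphi_im x y) + bilin (gram L) (phi_im x y) (dphi_re x y)
      - bilin (coordmx L) (trace_vec L) (phi_im x y)).
Proof.
move=> sa; have diffcE j := diffc_coord x y (sa j).
have coE j := trace_co0_coord x y (sa j).
rewrite drift_selfadj // /gram -!gram_sum !bilin_sum !big_ord_recl !big_ord0.
by rewrite !diffcE !coE !mxE; simpc; congr (_ +i* _); ring.
Qed.

Lemma drift_gram_scalar L k x y : (forall j, selfadj (L j)) -> gram L = k%:M ->
  drift L (x +i* y) =
    - (bilin (coordmx L) (trace_vec L) (phi_re x y)
       +i* bilin (coordmx L) (trace_vec L) (phi_im x y)).
Proof.
move=> sa G; rewrite drift_gram // G !(bilin_scalar k).
have [_ _ _ -> ->] := phi_orthogonal x y.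
by simpc; congr (_ +i* _); ring.
Qed.

Lemma scalar_mx_of_phi_forms (G : 'M[R]_3) k : G^T = G ->
  (forall x y, [/\ bilin G (phi_re x y) (phi_re x y) = k * (1 + x ^+ 2 + y ^+ 2) ^+ 2,
                   bilin G (phi_im x y) (phi_im x y) = k * (1 + x ^+ 2 + y ^+ 2) ^+ 2 &
                   bilin G (phi_re x y) (phi_im x y) = 0]) ->
  G = k%:M.
Proof.
move=> Gsym H; have Gsym' i j : G j i = G i j by rewrite -{1}Gsym mxE.
have [] := H 0 0; have [] := H 1 0; have [_ _] := H 0 1.
rewrite !(bilin_sum, big_ord_recl, big_ord0, mxE) /= !(expr0n, expr1n) /=.
rewrite !(mulr0, mul0r, mulr1, mul1r, addr0, add0r, subr0, subrr) => h1 h2 _ h3 h4 h5 h6.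
apply/matrixP; apply: ord3_ind; apply: ord3_ind; rewrite !mxE /= ?mulr1n ?mulr0n;
  by [lra | rewrite -Gsym'; lra].
Qed.

Lemma row_eq0_of_phi (r : 'rV[R]_3) :
  (forall x y, (r *m phi_re x y) 0 0 = 0 /\ (r *m phi_im x y) 0 0 = 0) -> r = 0.
Proof.
move=> H; have [h1 h2] := H 0 0; have [h3 _] := H 1 0.
move: h1 h2 h3; rewrite !(big_ord_recl, big_ord0, mxE) /= => h1 h2 h3.
by apply/rowP; apply: ord3_ind; rewrite !mxE; lra.
Qed.

Lemma generator_eq_LB_iff L c : (forall j, selfadj (L j)) ->
  (forall f x y, generator L f x y = c * laplace_beltrami f x y) <->
  gram L = (c / 2)%:M /\ forall x y, drift L (x +i* y) = 0.
Proof.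
move=> sa; split => [gen | [G drift0] f x y]; last first.
  rewrite generator_gram // drift0 G !(bilin_scalar (c / 2)).
  have [-> -> -> _ _] := phi_orthogonal x y.
  by rewrite /laplace_beltrami /=; field.
have coef x y : [/\ Re (drift L (x +i* y)) = 0, Im (drift L (x +i* y)) = 0,
    2^-1 * bilin (gram L) (phi_re x y) (phi_re x y) - c / 4 * (1 + x ^+ 2 + y ^+ 2) ^+ 2 = 0,
    bilin (gram L) (phi_re x y) (phi_im x y) = 0 &
    2^-1 * bilin (gram L) (phi_im x y) (phi_im x y) - c / 4 * (1 + x ^+ 2 + y ^+ 2) ^+ 2 = 0].
  apply: second_order_coef_eq0 => f.
  transitivity (generator L f x y - c * laplace_beltrami f x y); last by rewrite gen subrr.
  by rewrite generator_gram // /laplace_beltrami; field.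
split.
  apply: scalar_mx_of_phi_forms => [|x y]; first by rewrite /gram trmx_mul trmxK.
  by have [_ _ h1 h2 h3] := coef x y; split; lra.
by move=> x y; have [h1 h2 _ _ _] := coef x y; case: (drift L _) h1 h2 => a b /= -> ->.
Qed.

Lemma drift_eq0_iff_trace0 L k : (forall j, selfadj (L j)) -> k != 0 -> gram L = k%:M ->
  (forall x y, drift L (x +i* y) = 0) <-> trace_vec L = 0.
Proof.
move=> sa k0 G; have Munit := unitmx_trmx_mul_scalar k0 G.
split => [drift0 | s0 x y]; last first.
  by rewrite (drift_gram_scalar x y sa G) /bilin s0 trmx0 !mul0mx mxE; simpc.
have sM0 : (trace_vec L)^T *m coordmx L = 0.
  apply: row_eq0_of_phi => x y; move: (drift0 x y).
  rewrite (drift_gram_scalar x y sa G); simpc => -[/eqP + /eqP].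
  by rewrite !oppr_eq0 => /eqP re0 /eqP im0; split; [exact: re0 | exact: im0].
have sT0 : (trace_vec L)^T = 0 by rewrite -[_^T](mulmxK Munit) sM0 mul0mx.
by rewrite -[trace_vec L]trmxK sT0 trmx0.
Qed.

Lemma tsa_basis_of_generator L c : (forall j, selfadj (L j)) -> c != 0 ->
  (forall f x y, generator L f x y = c * laplace_beltrami f x y) ->
  is_tsa_basis L /\ orth_with L c.
Proof.
move=> sa c0 /generator_eq_LB_iff[// | G drift0].
have k0 : c / 2 != 0 by rewrite mulf_neq0 // invr_eq0 pnatr_eq0.
have s0 := (drift_eq0_iff_trace0 sa k0 G).1 drift0.
have tsa j : traceless_sa (L j).
  split; first exact: sa.
  by rewrite (trace_selfadj (sa j)); move/colP/(_ j): s0; rewrite !mxE => ->.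
split; first exact: is_tsa_basis_unitmx tsa (unitmx_trmx_mul_scalar k0 G).
by apply/orth_with_coordmx => //; exact: trmx_mul_scalarC k0 G.
Qed.

Lemma generator_of_tsa_basis L a : is_tsa_basis L -> orth_with L a ->
  a != 0 /\ forall f x y, generator L f x y = a * laplace_beltrami f x y.
Proof.
move=> basis orth; have [tsa _] := basis; have sa j := (tsa j).1.
have MMt := (orth_with_coordmx a tsa).1 orth.
have a0 : a != 0.
  apply: contraNneq (tsa_basis_coordmx_neq0 basis) => a0; apply/eqP/mulmx_tr_eq0.
  by rewrite MMt a0 mul0r -scalemx1 scale0r.
have k0 : a / 2 != 0 by rewrite mulf_neq0 // invr_eq0 pnatr_eq0.
have G : gram L = (a / 2)%:M.
  by rewrite /gram -[X in _ *m X]trmxK; apply: trmx_mul_scalarC k0 _; rewrite trmxK.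
have s0 : trace_vec L = 0 by apply/colP => j; rewrite !mxE (tsa j).2.
split => //; apply/generator_eq_LB_iff => //; split => //.
exact: (drift_eq0_iff_trace0 sa k0 G).2.
Qed.

End Qubit.

Theorem proposition3p3 (R : realType) (L : 'I_3 -> 'M[R[i]]_2) :
  (forall j, selfadj (L j)) ->
  ((exists c : R, c != 0 /\
      forall (f : R -> R -> R) (x y : R),
        generator L f x y = c * laplace_beltrami f x y)
   <-> (is_tsa_basis L /\ exists a : R, orth_with L a))
  /\ (forall a : R, is_tsa_basis L -> orth_with L a ->
        forall (f : R -> R -> R) (x y : R),
          generator L f x y = a * laplace_beltrami f x y)
  /\ orth_with (@pauli R) 2.
Proof.
move=> sa; split; [split | split].
- case=> c [c0 gen]; have [basis orth] := tsa_basis_of_generator sa c0 gen.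
  by split=> //; exists c.
- case=> basis [a orth]; have [a0 gen] := generator_of_tsa_basis basis orth.
  by exists a.
- by move=> a basis orth; have [_ gen] := generator_of_tsa_basis basis orth.
- exact: orth_with_pauli.
Qed.
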